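(* Let $\{\mathcal G,(\Gamma_0,\Gamma_1),(\widetilde\Gamma_0,\widetilde\Gamma_1)\}$ be a triple for the adjoint pair $\{S,\widetilde S\}$ satisfying (G), (D), (M), with $\rho(A_0)\neq\emptyset$ (equivalently $\rho(\widetilde A_0)\neq\emptyset$), $\gamma$-fields $\gamma,\widetilde\gamma$ and Weyl functions $M,\widetilde M$. Let $B_1,B_2,\widetilde B_1,\widetilde B_2$ be linear operators in $\mathcal G$, and let $\lambda\in\rho(A_0)$, $\mu\in\rho(\widetilde A_0)$. (i) If $\lambda\notin\sigma_p(A_{B_1B_2})$ and $f\in\mathfrak H$ satisfies $\widetilde\gamma(\overline\lambda)^*f\in\operatorname{dom}B_2$ and $B_2\widetilde\gamma(\overline\lambda)^*f\in\operatorname{ran}(I-B_2M(\lambda)B_1)$, then $f\in\operatorname{ran}(A_{B_1B_2}-\lambda)$ and $(A_{B_1B_2}-\lambda)^{-1}f=(A_0-\lambda)^{-1}f+\gamma(\lambda)B_1(I-B_2M(\lambda)B_1)^{-1}B_2\widetilde\gamma(\overline\lambda)^*f$. If these two conditions hold for all $f\in\mathfrak H$, then $A_{B_1B_2}-\lambda$ is a bijection of $\operatorname{dom}A_{B_1B_2}$ onto $\mathfrak H$. (ii) If $\mu\notin\sigma_p(\widetilde A_{\widetilde B_1\widetilde B_2})$ and $g\in\mathfrak H$ satisfies $\gamma(\overline\mu)^*g\in\operatorname{dom}\widetilde B_2$ and $\widetilde B_2\gamma(\overline\mu)^*g\in\operatorname{ran}(I-\widetilde B_2\widetilde M(\mu)\widetilde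 B_1)$, then $g\in\operatorname{ran}(\widetilde A_{\widetilde B_1\widetilde B_2}-\mu)$ and $(\widetilde A_{\widetilde B_1\widetilde B_2}-\mu)^{-1}g=(\widetilde A_0-\mu)^{-1}g+\widetilde\gamma(\mu)\widetilde B_1(I-\widetilde B_2\widetilde M(\mu)\widetilde B_1)^{-1}\widetilde B_2\gamma(\overline\mu)^*g$. If these two conditions hold for all $g\in\mathfrak H$, then $\widetilde A_{\widetilde B_1\widetilde B_2}-\mu$ is a bijection of $\operatorname{dom}\widetilde A_{\widetilde B_1\widetilde B_2}$ onto $\mathfrak H$.
   Context: Let $\mathfrak H$ be a separable Hilbert space. An adjoint pair $\{S,\widetilde S\}$ consists of densely defined closed operators $S,\widetilde S$ in $\mathfrak H$ with $(Sf,g)=(f,\widetilde Sg)$ for all $f\in\operatorname{dom}S$, $g\in\operatorname{dom}\widetilde S$. Fix operators $T\subset S^*$ and $\widetilde T\subset\widetilde S^*$ which are cores, i.e. $\overline T=S^*$ and $\overline{\widetilde T}=\widetilde S^*$. A triple $\{\mathcal G,(\Gamma_0,\Gamma_1),(\widetilde\Gamma_0,\widetilde\Gamma_1)\}$ for $\{S,\widetilde S\}$ consists of a Hilbert space $\mathcal G$ and linear maps $\Gamma_0,\Gamma_1:\operatorname{dom}T\to\mathcal G$, $\widetilde\Gamma_0,\widetilde\Gamma_1:\operatorname{dom}\widetilde T\to\mathcal G$. Put $A_0:=T\upharpoonright\ker\Gamma_0$ and $\widetilde A_0:=\widetilde T\upharpoonright\ker\widetilde\Gamma_0$. Conditions: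 (G) $(Tf,g)_{\mathfrak H}-(f,\widetilde Tg)_{\mathfrak H}=(\Gamma_1f,\widetilde\Gamma_0g)_{\mathcal G}-(\Gamma_0f,\widetilde\Gamma_1g)_{\mathcal G}$ for all $f\in\operatorname{dom}T$, $g\in\operatorname{dom}\widetilde T$; (D) $\operatorname{ran}\Gamma_0$ and $\operatorname{ran}\widetilde\Gamma_0$ are dense in $\mathcal G$; (M) $A_0^*=\widetilde A_0$ and $\widetilde A_0^*=A_0$. For $\lambda\in\rho(A_0)$ one has $\operatorname{dom}T=\ker\Gamma_0\dotplus\ker(T-\lambda)$, so $\Gamma_0\upharpoonright\ker(T-\lambda)$ is injective; similarly for $\widetilde T$. The $\gamma$-fields are $\gamma(\lambda):=(\Gamma_0\upharpoonright\ker(T-\lambda))^{-1}$, $\widetilde\gamma(\mu):=(\widetilde\Gamma_0\upharpoonright\ker(\widetilde T-\mu))^{-1}$; the Weyl functions are $M(\lambda):=\Gamma_1\gamma(\lambda)$, $\lambda\in\rho(A_0)$, and $\widetilde M(\mu):=\widetilde\Gamma_1\widetilde\gamma(\mu)$, $\mu\in\rho(\widetilde A_0)$. Products of operators have their natural domains, e.g. $\operatorname{dom}(B_1B_2)=\{\varphi\in\operatorname{dom}B_2:B_2\varphi\in\operatorname{dom}B_1\}$, and $(I-B_2M(\lambda)B_1)^{-1}$ denotes the inverse of the (injective) operator $I-B_2M(\lambda)B_1$ defined on its range. Define $A_{B_1B_2}f:=Tf$ on $\operatorname{dom}A_{B_1B_2}:=\{f\in\operatorname{dom}T:\Gamma_1f\in\operatorname{dom}(B_1B_2),\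 B_1B_2\Gamma_1f=\Gamma_0f\}$ and $\widetilde A_{\widetilde B_1\widetilde B_2}g:=\widetilde Tg$ on $\operatorname{dom}\widetilde A_{\widetilde B_1\widetilde B_2}:=\{g\in\operatorname{dom}\widetilde T:\widetilde\Gamma_1g\in\operatorname{dom}(\widetilde B_1\widetilde B_2),\ \widetilde B_1\widetilde B_2\widetilde\Gamma_1g=\widetilde\Gamma_0g\}$. $\sigma_p$ denotes the set of eigenvalues. *)

From mathcomp Require Import all_boot all_order all_algebra.
From mathcomp Require Import complex.
From mathcomp Require Import classical_sets reals.
Set Implicit Arguments. Unset Strict Implicit. Unset Printing Implicit Defensive.
Import Order.TTheory GRing.Theory Num.Theory.
Local Open Scope ring_scope.
Local Open Scope classical_set_scope.

Section Hilbert.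
Variable R : realType.
Local Notation C := (complex R).
Variable V : lmodType C.
Variable ip : V -> V -> C.

Definition hnorm (x : V) : C := sqrtC (ip x x).

Definition seq_cvg (u : nat -> V) (l : V) : Prop :=
  forall e : C, 0 < e -> exists N, forall n, (N <= n)%N -> hnorm (u n - l) < e.

Definition seq_cauchy (u : nat -> V) : Prop :=
  forall e : C, 0 < e -> exists N, forall m n, (N <= m)%N -> (N <= n)%N ->
    hnorm (u m - u n) < e.

Definition is_hilbert : Prop :=
  [/\ (forall (a : C) (x y z : V), ip (a *: x + y) z = a * ip x z + ip y z),
      (forall x y : V, ip y x = (ip x y)^*),
      (forall x : V, 0 <= ip x x),
      (forall x : V, ip x x = 0 -> x = 0) &
      (forall u : nat -> V, seq_cauchy u -> exists l, seq_cvg u l)].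

Definition dense_in (D : set V) : Prop :=
  forall (x : V) (e : C), 0 < e -> exists2 d, D d & hnorm (x - d) < e.

Definition separable : Prop :=
  exists d : nat -> V, dense_in (range d).

End Hilbert.

(* (Possibly unbounded) linear operators, represented by their graphs.      *)
(* An operator from V to W is a set of pairs; (x, y) \in A means x \in dom A *)
(* and A x = y.  Products, inverses, sums etc. are the usual graph          *)
(* operations; products have their natural domains.                        *)
Section Operators.
Variable K : fieldType.

Definition op (V W : lmodType K) := set (V * W).

Section Defs.
Variables U V W : lmodType K.

Definition is_op (A : op V W) : Prop :=
  [/\ A (0, 0),
      (forall (a : K) x y x' y', A (x, y) -> A (x', y') ->
          A (a *: x + x', a *: y + y')) &
      (forall y, A (0, y) -> y = 0)].

Definition dom (A : op V W) : set V := [set x | exists y, A (x, y)].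
Definition ran (A : op V W) : set W := [set y | exists x, A (x, y)].

Definition opinv (A : op V W) : op W V := [set p | A (p.2, p.1)].

(* product B A  (first A, then B), with its natural domain *)
Definition opmul (B : op V W) (A : op U V) : op U W :=
  [set p | exists y, A (p.1, y) /\ B (y, p.2)].

Definition opadd (A B : op V W) : op V W :=
  [set p | exists y z, [/\ A (p.1, y), B (p.1, z) & p.2 = y + z]].

Definition opsub (A B : op V W) : op V W :=
  [set p | exists y z, [/\ A (p.1, y), B (p.1, z) & p.2 = y - z]].

Definition opid : op V V := [set p | p.2 = p.1].

Definition opshift (A : op V V) (l : K) : op V V :=
  [set p | exists y, A (p.1, y) /\ p.2 = y - l *: p.1].

Definition oprestr (A : op V W) (D : set V) : op V W :=
  [set p | A p /\ D p.1].

Definition fgraph (f : V -> W) (D : set V) : op V W :=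
  [set p | D p.1 /\ p.2 = f p.1].

Definition eigker (A : op V V) (l : K) : set V :=
  [set x | A (x, l *: x)].

Definition point_spec (A : op V V) : set K :=
  [set l | exists2 x, x <> 0 & A (x, l *: x)].

Definition linear_on (D : set V) (f : V -> W) : Prop :=
  forall (a : K) x y, D x -> D y -> f (a *: x + y) = a *: f x + f y.

End Defs.
End Operators.
Arguments opid {K V}.

Section HilbertOperators.
Variable R : realType.
Local Notation C := (complex R).
Variables V W : lmodType C.
Variable ipV : V -> V -> C.
Variable ipW : W -> W -> C.

Definition adjoint (A : op V W) : op W V :=
  [set p | forall x y, A (x, y) -> ipW y p.1 = ipV x p.2].

Definition opclosure (A : op V W) : op V W :=
  [set p | exists u : nat -> V * W, (forall n, A (u n)) /\
       seq_cvg ipV (fun n => (u n).1) p.1 /\ seq_cvg ipW (fun n => (u n).2) p.2].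

Definition densely_defined (A : op V W) : Prop := dense_in ipV (dom A).

Definition closed_op (A : op V W) : Prop := opclosure A = A.

End HilbertOperators.

Section Resolvent.
Variable R : realType.
Local Notation C := (complex R).
Variable V : lmodType C.
Variable ip : V -> V -> C.

Definition resolvent (A : op V V) : set C :=
  [set l | [/\ (forall x, opshift A l (x, 0) -> x = 0),
              (forall y, ran (opshift A l) y) &
              (exists c : C, 0 <= c /\ forall x y, opshift A l (x, y) ->
                  hnorm ip x <= c * hnorm ip y)]].

End Resolvent.

Section Triples.
Variable R : realType.
Local Notation C := (complex R).
Variables H G : lmodType C.
Variable ipH : H -> H -> C.
Variable ipG : G -> G -> C.

Definition adjoint_pair (S St : op H H) : Prop :=
  is_op S /\ is_op St /\ densely_defined ipH S /\ densely_defined ipH St /\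
      closed_op ipH ipH S /\ closed_op ipH ipH St /\
      (forall f Sf g Stg, S (f, Sf) -> St (g, Stg) -> ipH Sf g = ipH f Stg).

Definition A0op (T : op H H) (Gam0 : H -> G) : op H H :=
  oprestr T [set f | Gam0 f = 0].

Definition gammaf (T : op H H) (Gam0 : H -> G) (l : C) : op G H :=
  opinv (fgraph Gam0 (eigker T l)).

Definition weylf (T : op H H) (Gam0 Gam1 : H -> G) (l : C) : op G G :=
  opmul (fgraph Gam1 (dom T)) (gammaf T Gam0 l).

Definition ABop (T : op H H) (Gam0 Gam1 : H -> G) (B1 B2 : op G G) : op H H :=
  [set p | T p /\ opmul B1 B2 (Gam1 p.1, Gam0 p.1)].

Definition is_triple (S St T Tt : op H H) (Gam0 Gam1 Gam0t Gam1t : H -> G)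
  : Prop :=
  is_op T /\ is_op Tt /\
      T `<=` adjoint ipH ipH S /\ opclosure ipH ipH T = adjoint ipH ipH S /\
      Tt `<=` adjoint ipH ipH St /\ opclosure ipH ipH Tt = adjoint ipH ipH St /\
      linear_on (dom T) Gam0 /\ linear_on (dom T) Gam1 /\
      linear_on (dom Tt) Gam0t /\ linear_on (dom Tt) Gam1t /\
      (* (G) Green identity *)
      (forall f Tf g Ttg, T (f, Tf) -> Tt (g, Ttg) ->
          ipH Tf g - ipH f Ttg = ipG (Gam1 f) (Gam0t g) - ipG (Gam0 f) (Gam1t g)) /\
      (* (D) density of the ranges of Gam0, Gam0t *)
      dense_in ipG [set Gam0 f | f in dom T] /\
      dense_in ipG [set Gam0t g | g in dom Tt] /\
      (* (M) *)
      adjoint ipH ipH (A0op T Gam0) = A0op Tt Gam0t /\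
      adjoint ipH ipH (A0op Tt Gam0t) = A0op T Gam0.

End Triples.

(* Let [(A0 - l) k = f].  Green's identity gives [gamma~(conj l)^* f = Gam1 k].
   If [(I - B2 M(l) B1) eta = B2 Gam1 k] and [h = gamma(l) B1 eta], then
   [x = k + h] lies in [ker Gam0 + ker (T - l)], with [Gam0 x = B1 eta] and
   [B2 Gam1 x = B2 Gam1 k + B2 M(l) B1 eta = eta]; so [x] is in the domain of
   [A_{B1 B2}] and [(T - l) x = f].  Uniqueness comes from [l] not being an
   eigenvalue of [A_{B1 B2}] (which also makes [I - B2 M(l) B1] injective) and
   from [gamma~(conj l)^*] being single-valued.  The latter holds because
   [Gam0~] maps [ker (T~ - conj l)] onto a dense set, which needs [conj l] in
   the resolvent set of [A0~ = A0^*]; that surjectivity is the Riesz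
   representation theorem, obtained from the least-norm point of the closed
   hyperplane [phi = 1].  Part (ii) is part (i) for the swapped triple. *)

From Pilot Require Import Defs.
From mathcomp Require Import all_boot all_order all_algebra.
From mathcomp Require Import complex.
From mathcomp Require Import classical_sets reals boolp.
From mathcomp Require Import ring lra.
Import Order.TTheory GRing.Theory Num.Theory.
Local Open Scope ring_scope.
Local Open Scope classical_set_scope.
Set Implicit Arguments. Unset Strict Implicit. Unset Printing Implicit Defensive.

Section LinearRelations.
Variable K : fieldType.

Definition lin_closed (V : lmodType K) (D : set V) :=
  forall (a : K) x y, D x -> D y -> D (a *: x + y).

Definition linear_rel (V W : lmodType K) (A : op V W) :=
  forall (a : K) x y x' y', A (x, y) -> A (x', y') -> A (a *: x + x', a *: y + y').

Definition single_valued (V W : lmodType K) (A : op V W) :=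
  forall x y y', A (x, y) -> A (x, y') -> y = y'.

Section LinearRelTheory.
Variables V W : lmodType K.
Variable A : op V W.
Hypothesis linA : linear_rel A.

Lemma linear_relD x y x' y' : A (x, y) -> A (x', y') -> A (x + x', y + y').
Proof. by move=> Axy Axy'; have := linA 1 Axy Axy'; rewrite !scale1r. Qed.

Lemma linear_relB x y x' y' : A (x, y) -> A (x', y') -> A (x - x', y - y').
Proof.
move=> Axy Axy'; have := linA (-1) Axy' Axy.
by rewrite !scaleN1r ![- _ + _]addrC.
Qed.

Lemma linear_rel_sv : (forall y, A (0, y) -> y = 0) -> single_valued A.
Proof.
move=> A0 x y y' Axy Axy'; apply/eqP; rewrite -subr_eq0; apply/eqP/A0.
by have := linear_relB Axy Axy'; rewrite subrr.
Qed.

Lemma dom_lin_closed : lin_closed (dom A).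
Proof. by move=> a x x' [y Axy] [y' Axy']; exists (a *: y + y'); apply: linA. Qed.

End LinearRelTheory.

Section LinearOn.
Variables V W : lmodType K.
Variables (D : set V) (f : V -> W).
Hypothesis linf : linear_on D f.

Lemma linear_onD x y : D x -> D y -> f (x + y) = f x + f y.
Proof. by move=> Dx Dy; have := linf 1 Dx Dy; rewrite !scale1r. Qed.

Lemma linear_onB x y : D x -> D y -> f (x - y) = f x - f y.
Proof. by move=> Dx Dy; have := linf (-1) Dy Dx; rewrite !scaleN1r ![- _ + _]addrC. Qed.

Lemma linear_on0 x : D x -> f 0 = 0.
Proof. by move=> Dx; rewrite -(subrr x) linear_onB // subrr. Qed.

Lemma linear_on_sub (D' : set V) : D' `<=` D -> linear_on D' f.
Proof. by move=> sD a x y /sD Dx /sD Dy; apply: linf. Qed.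

End LinearOn.

Lemma is_op_linear (V W : lmodType K) (A : op V W) : is_op A -> linear_rel A.
Proof. by case. Qed.

Lemma is_op_sv (V W : lmodType K) (A : op V W) : is_op A -> single_valued A.
Proof. by case=> _ linA A0; apply: linear_rel_sv. Qed.

Lemma opinv_linear (V W : lmodType K) (A : op V W) :
  linear_rel A -> linear_rel (opinv A).
Proof. by move=> linA a x y x' y'; apply: linA. Qed.

Lemma opinv_sv (V W : lmodType K) (A : op V W) :
  linear_rel A -> (forall x, A (x, 0) -> x = 0) -> single_valued (opinv A).
Proof. by move=> linA Ainj; apply: linear_rel_sv (opinv_linear linA) _. Qed.

Lemma opmul_linear (U V W : lmodType K) (B : op V W) (A : op U V) :
  linear_rel B -> linear_rel A -> linear_rel (opmul B A).
Proof.
move=> linB linA a x z x' z' [y [Axy Byz]] [y' [Axy' Byz']].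
by exists (a *: y + y'); split; [apply: linA | apply: linB].
Qed.

Lemma opmul_sv (U V W : lmodType K) (B : op V W) (A : op U V) :
  single_valued B -> single_valued A -> single_valued (opmul B A).
Proof.
move=> svB svA x z z' [y [Axy Byz]] [y' [Axy' By'z']].
by rewrite (svA _ _ _ Axy Axy') in Byz; apply: svB Byz By'z'.
Qed.

Lemma opadd_sv (V W : lmodType K) (A B : op V W) :
  single_valued A -> single_valued B -> single_valued (opadd A B).
Proof.
move=> svA svB x u u' [y [z [/= Axy Bxz ->]]] [y' [z' [/= Axy' Bxz' ->]]].
by rewrite (svA _ _ _ Axy Axy') (svB _ _ _ Bxz Bxz').
Qed.

Lemma opsub_linear (V W : lmodType K) (A B : op V W) :
  linear_rel A -> linear_rel B -> linear_rel (opsub A B).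
Proof.
move=> linA linB a x u x' u' [y [z [/= Axy Bxz ->]]] [y' [z' [/= Axy' Bxz' ->]]].
exists (a *: y + y'), (a *: z + z'); split; [exact: linA | exact: linB |].
by rewrite scalerBr opprD addrACA.
Qed.

Lemma opid_linear (V : lmodType K) : linear_rel (@opid K V).
Proof. by move=> a x y x' y'; rewrite /opid /= => -> ->. Qed.

Lemma opshift_linear (V : lmodType K) (A : op V V) l :
  linear_rel A -> linear_rel (opshift A l).
Proof.
move=> linA a x u x' u' [y [/= Axy ->]] [y' [/= Axy' ->]].
exists (a *: y + y'); split; first exact: linA.
by rewrite /= scalerBr scalerDr !scalerA opprD addrACA mulrC.
Qed.

Lemma opshift_sv_inv (V : lmodType K) (A : op V V) l :
  linear_rel A -> (forall x, opshift A l (x, 0) -> x = 0) ->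
  single_valued (opinv (opshift A l)).
Proof. by move=> linA; apply/opinv_sv/opshift_linear. Qed.

(* [Defs.] is needed: finfun's [fgraph] shadows the graph of a map. *)
Lemma fgraph_linear (V W : lmodType K) (f : V -> W) (D : set V) :
  lin_closed D -> linear_on D f -> linear_rel (Defs.fgraph f D).
Proof.
move=> linD linf a x u x' u' [/= Dx ->] [/= Dx' ->].
by split; [exact: linD | rewrite /= linf].
Qed.

Lemma eigker_lin_closed (V : lmodType K) (A : op V V) l :
  linear_rel A -> lin_closed (eigker A l).
Proof.
by move=> linA a x y Ax Ay; rewrite /eigker /= scalerDr scalerA mulrC -scalerA; apply: linA.
Qed.

Lemma eigker_dom (V : lmodType K) (A : op V V) l : eigker A l `<=` dom A.
Proof. by move=> x Ax; exists (l *: x). Qed.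

End LinearRelations.

Section ComplexAbs2.
Variable R : realType.
Local Notation C := (complex R).
Local Notation Re := complex.Re.
Local Notation Im := complex.Im.

Definition cabs2 (z : C) : R := Re z ^+ 2 + Im z ^+ 2.

Lemma cabs2_ge0 z : 0 <= cabs2 z.
Proof. by rewrite /cabs2 addr_ge0 ?sqr_ge0. Qed.

Lemma cabs2_le0 z : cabs2 z <= 0 -> z = 0.
Proof.
case: z => a b; rewrite /cabs2 /= => le0.
have /eqP : a ^+ 2 = 0 by apply/eqP; rewrite eq_le sqr_ge0 andbT; nra.
have /eqP : b ^+ 2 = 0 by apply/eqP; rewrite eq_le sqr_ge0 andbT; nra.
by rewrite !sqrf_eq0 => /eqP -> /eqP ->.
Qed.

Lemma gtc0_real (e : C) : 0 < e -> e = (Re e)%:C%C /\ 0 < Re e.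
Proof.
case: e => a b; rewrite ltcE /= => /andP[/eqP b0 a_gt0]; split=> //.
by rewrite b0.
Qed.

Lemma Re_conj_scaleN (t : R) z : Re ((- (t%:C%C * z))^* * z) = - (t * cabs2 z).
Proof. by rewrite /cabs2; case: z => z1 z2 /=; ring. Qed.

Lemma cabs2_scaleN (t : R) z : cabs2 (- (t%:C%C * z)) = t ^+ 2 * cabs2 z.
Proof. by rewrite /cabs2; case: z => z1 z2 /=; ring. Qed.

End ComplexAbs2.

Lemma invSn_lt (R : realType) (eps : R) : 0 < eps ->
  exists N, forall k, (N <= k)%N -> (k.+1%:R)^-1 < eps.
Proof.
move=> eps_gt0; exists (Num.Def.archi_bound eps^-1) => k le_Nk.
rewrite -[X in _ < X](invrK eps) ltf_pV2 ?posrE ?invr_gt0 ?ltr0Sn //.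
apply: (lt_le_trans (archi_boundP _)); first by rewrite invr_ge0 ltW.
by rewrite ler_nat; apply: leq_trans le_Nk _.
Qed.

Section InnerProduct.
Variable R : realType.
Local Notation C := (complex R).
Local Notation Re := complex.Re.
Variable V : lmodType C.
Variable ip : V -> V -> C.
Hypothesis hV : is_hilbert ip.

Lemma ipZDl a x y z : ip (a *: x + y) z = a * ip x z + ip y z.
Proof. by case: hV => linl _ _ _ _; apply: linl. Qed.

Lemma ip_conj x y : ip y x = (ip x y)^*.
Proof. by case: hV => _ conj _ _ _; apply: conj. Qed.

Lemma ip_ge0 x : 0 <= ip x x.
Proof. by case: hV => _ _ pos _ _; apply: pos. Qed.

Lemma ip_eq0 x : ip x x = 0 -> x = 0.
Proof. by case: hV => _ _ _ def _; apply: def. Qed.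

Lemma hilbert_complete u : seq_cauchy ip u -> exists l, seq_cvg ip u l.
Proof. by case: hV => _ _ _ _ compl; apply: compl. Qed.

Lemma ipDl x y z : ip (x + y) z = ip x z + ip y z.
Proof. by rewrite -[x]scale1r ipZDl mul1r scale1r. Qed.

Lemma ip0l z : ip 0 z = 0.
Proof. by apply: (addrI (ip 0 z)); rewrite -ipDl !addr0. Qed.

Lemma ipZl a x z : ip (a *: x) z = a * ip x z.
Proof. by rewrite -[a *: x]addr0 ipZDl ip0l addr0. Qed.

Lemma ipBl x y z : ip (x - y) z = ip x z - ip y z.
Proof. by rewrite ipDl -scaleN1r ipZl mulN1r. Qed.

Lemma ipDr z x y : ip z (x + y) = ip z x + ip z y.
Proof. by rewrite ip_conj ipDl rmorphD /= -!ip_conj. Qed.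

Lemma ipZr z a x : ip z (a *: x) = a^* * ip z x.
Proof. by rewrite ip_conj ipZl rmorphM /= -ip_conj. Qed.

Lemma ip0r z : ip z 0 = 0.
Proof. by rewrite ip_conj ip0l rmorph0. Qed.

Lemma ipBr z x y : ip z (x - y) = ip z x - ip z y.
Proof. by rewrite ip_conj ipBl rmorphB /= -!ip_conj. Qed.

Definition sqnorm x := Re (ip x x).

Lemma ip_real x : ip x x = (sqnorm x)%:C%C.
Proof. by rewrite /sqnorm RRe_real // ger0_real // ip_ge0. Qed.

Lemma sqnorm_ge0 x : 0 <= sqnorm x.
Proof. by have := ip_ge0 x; rewrite ip_real ler0c. Qed.

Lemma sqnorm_le0 x : sqnorm x <= 0 -> x = 0.
Proof.
move=> le0; apply: ip_eq0; rewrite ip_real.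
by apply/eqP; rewrite eq_complex /= eqxx andbT eq_le le0 sqnorm_ge0.
Qed.

Lemma sqnormDZ a s b :
  sqnorm (a + s *: b) = sqnorm a + 2 * Re (s^* * ip a b) + cabs2 s * sqnorm b.
Proof.
rewrite /sqnorm ipDl !ipDr !ipZl !ipZr [ip b a]ip_conj (ip_real a) (ip_real b).
move: (ip a b) (sqnorm a) (sqnorm b) => z na nb.
by case: s => s1 s2; case: z => z1 z2; rewrite /cabs2 /=; ring.
Qed.

Lemma sqnormZ s b : sqnorm (s *: b) = cabs2 s * sqnorm b.
Proof.
rewrite -[s *: b]add0r sqnormDZ ip0l mulr0 /=.
by rewrite /sqnorm ip0l /= mulr0 !add0r.
Qed.

Lemma sqnormN b : sqnorm (- b) = sqnorm b.
Proof. by rewrite -scaleN1r sqnormZ /cabs2 /=; ring. Qed.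

Lemma sqnormD a b : sqnorm (a + b) = sqnorm a + 2 * Re (ip a b) + sqnorm b.
Proof.
rewrite -[b in a + b]scale1r sqnormDZ /cabs2 /=.
by case: (ip a b) => z1 z2 /=; ring.
Qed.

Lemma sqnormB a b : sqnorm (a - b) = sqnorm a - 2 * Re (ip a b) + sqnorm b.
Proof.
rewrite -scaleN1r sqnormDZ /cabs2 /=.
by case: (ip a b) => z1 z2 /=; ring.
Qed.

Lemma sqnorm_parallelogram a b :
  sqnorm (a + b) + sqnorm (a - b) = 2 * sqnorm a + 2 * sqnorm b.
Proof. by rewrite sqnormD sqnormB; ring. Qed.

Lemma cauchy_schwarz a b : cabs2 (ip a b) <= sqnorm a * sqnorm b.
Proof.
have [b0|nb_neq0] := eqVneq (sqnorm b) 0.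
  have -> : b = 0 by apply: sqnorm_le0; rewrite b0.
  by rewrite ip0r /sqnorm ip0l /cabs2 /= mulr0 expr0n /= addr0.
have nb_gt0 : 0 < sqnorm b by rewrite lt_def nb_neq0 sqnorm_ge0.
set t := (sqnorm b)^-1.
have := sqnorm_ge0 (a + (- (t%:C%C * ip a b)) *: b).
rewrite sqnormDZ Re_conj_scaleN cabs2_scaleN => /(mulr_ge0 (ltW nb_gt0)).
suff -> : sqnorm b * (sqnorm a + 2 * - (t * cabs2 (ip a b))
                      + t ^+ 2 * cabs2 (ip a b) * sqnorm b)
          = sqnorm a * sqnorm b - cabs2 (ip a b) by rewrite subr_ge0.
by rewrite /t; field.
Qed.

Lemma sqnormD_le a b (t : R) : 0 < t ->
  sqnorm (a + b) <= (1 + t) * sqnorm a + (1 + t^-1) * sqnorm b.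
Proof.
move=> t_gt0; have := sqnorm_ge0 (a - t^-1%:C%C *: b).
rewrite -scaleNr sqnormDZ sqnormD.
move: (ip a b) (sqnorm a) (sqnorm b) (sqnorm_ge0 a) (sqnorm_ge0 b) => [z1 z2] na nb na0 nb0.
rewrite /cabs2 /= => ge0.
have tV : t * t^-1 = 1 by rewrite mulfV ?gt_eqF.
have tV0 : 0 < t^-1 by rewrite invr_gt0.
nra.
Qed.

Lemma hnorm_ge0 x : 0 <= hnorm ip x.
Proof. by rewrite /hnorm sqrtC_ge0 ip_ge0. Qed.

Lemma hnorm_sqr x : hnorm ip x ^+ 2 = (sqnorm x)%:C%C.
Proof. by rewrite /hnorm sqrtCK ip_real. Qed.

Lemma hnorm_ltE x (e : C) : 0 < e -> (hnorm ip x < e) = (sqnorm x < Re e ^+ 2).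
Proof.
move=> /gtc0_real[eE e_gt0].
have e_nneg : e \is Num.nneg by rewrite qualifE /= eE ler0c ltW.
have x_nneg : hnorm ip x \is Num.nneg by rewrite qualifE /= hnorm_ge0.
rewrite -(ltr_pXn2r (ltn0Sn 1) x_nneg e_nneg) hnorm_sqr [in LHS]eE.
by rewrite -rmorphXn ltcR.
Qed.

Lemma sqnorm_le_of_hnorm x y (c : C) : 0 <= c ->
  hnorm ip x <= c * hnorm ip y -> sqnorm x <= Re c ^+ 2 * sqnorm y.
Proof.
move=> c_ge0 le_xy; have cE : c = (Re c)%:C%C by apply/esym/RRe_real/ger0_real.
have : hnorm ip x ^+ 2 <= (c * hnorm ip y) ^+ 2.
  by rewrite lerXn2r // qualifE /= ?hnorm_ge0 ?mulr_ge0 ?hnorm_ge0.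
by rewrite exprMn !hnorm_sqr cE -rmorphXn -rmorphM /= lecR.
Qed.

Lemma seq_cvg_sqnorm u l : seq_cvg ip u l ->
  forall eps : R, 0 < eps -> exists N, forall n, (N <= n)%N -> sqnorm (u n - l) < eps.
Proof.
move=> ul eps eps_gt0.
have e_gt0 : 0 < (Num.sqrt eps)%:C%C :> C by rewrite ltcR sqrtr_gt0.
have [N ulN] := ul _ e_gt0; exists N => n le_Nn.
by have := ulN n le_Nn; rewrite (hnorm_ltE _ e_gt0) /= sqr_sqrtr // ltW.
Qed.

Lemma seq_cauchy_sqnorm u : (forall eps : R, 0 < eps -> exists N, forall m n,
    (N <= m)%N -> (N <= n)%N -> sqnorm (u m - u n) < eps) -> seq_cauchy ip u.
Proof.
move=> uC e e_gt0; have [_ Re_gt0] := gtc0_real e_gt0.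
have [N uN] := uC (Re e ^+ 2) (exprn_gt0 _ Re_gt0).
by exists N => m n le_Nm le_Nn; rewrite hnorm_ltE // uN.
Qed.

End InnerProduct.

Section Riesz.
Variable R : realType.
Local Notation C := (complex R).
Variable V : lmodType C.
Variable ip : V -> V -> C.
Hypothesis hV : is_hilbert ip.
Local Notation sqnorm := (sqnorm ip).

Lemma minimizing_seq_cauchy (d : R) (xs : nat -> V) :
  (forall m n, 4 * d <= sqnorm (xs m + xs n)) ->
  (forall n, sqnorm (xs n) < d + (n.+1%:R)^-1) -> seq_cauchy ip xs.
Proof.
move=> mid_ge xs_lt; apply: (seq_cauchy_sqnorm hV) => eps eps_gt0.
have eps4_gt0 : 0 < eps / 4 by lra.
have [N invN] := invSn_lt eps4_gt0.
exists N => m n le_Nm le_Nn.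
have := sqnorm_parallelogram hV (xs m) (xs n).
have := mid_ge m n; have := xs_lt m; have := xs_lt n.
have := invN _ le_Nm; have := invN _ le_Nn.
move: (m.+1%:R^-1 : R) (n.+1%:R^-1 : R) => p q; lra.
Qed.

Lemma sqnorm_cvg_le (d : R) (xs : nat -> V) x : 0 <= d -> seq_cvg ip xs x ->
  (forall n, sqnorm (xs n) < d + (n.+1%:R)^-1) -> sqnorm x <= d.
Proof.
move=> d_ge0 xs_x xs_lt; apply/ler_addgt0Pr => e e_gt0.
set t := Num.min 1 (e / (d + 4)).
have de_gt0 : 0 < e / (d + 4) by rewrite divr_gt0 //; lra.
have t_gt0 : 0 < t by rewrite lt_min ltr01.
have t_le1 : t <= 1 by rewrite ge_min lexx.
have te : t * (d + 4) <= e.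
  rewrite -ler_pdivlMr; last lra.
  by rewrite ge_min lexx orbT.
have [N1 cvgN] := seq_cvg_sqnorm hV xs_x (exprn_gt0 2 t_gt0).
have [N2 invN] := invSn_lt t_gt0.
pose n := maxn N1 N2.
have xn_lt : sqnorm (xs n) < d + t.
  by apply: (lt_trans (xs_lt n)); rewrite ltrD2l invN ?leq_maxr.
have en_lt : sqnorm (x - xs n) < t ^+ 2.
  by rewrite -(sqnormN hV) opprB cvgN ?leq_maxl.
have := sqnormD_le hV (xs n) (x - xs n) t_gt0; rewrite addrC subrK.
have h1 : (1 + t^-1) * sqnorm (x - xs n) <= t ^+ 2 + t.
  have -> : t ^+ 2 + t = (1 + t^-1) * t ^+ 2 by field; rewrite gt_eqF.
  by rewrite ler_pM2l ?ltW // ltr_wpDr ?invr_ge0 ?ltW.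
have h2 : (1 + t) * sqnorm (xs n) <= (1 + t) * (d + t).
  by rewrite ler_pM2l ?ltW //; lra.
nra.
Qed.

Lemma sqnorm_min_exists (E : set V) :
  E !=set0 ->
  (forall x y, E x -> E y -> E ((2^-1)%:C%C *: (x + y))) ->
  (forall u x, (forall n, E (u n)) -> seq_cvg ip u x -> E x) ->
  exists2 x0, E x0 & forall x, E x -> sqnorm x0 <= sqnorm x.
Proof.
move=> [x1 Ex1] midE closedE.
pose N := [set sqnorm x | x in E].
have N_lb : has_lbound N by exists 0 => _ [x _ <-]; exact: sqnorm_ge0.
have N_ne : N !=set0 by exists (sqnorm x1), x1.
have inf_le x : E x -> inf N <= sqnorm x by move=> Ex; apply: ge_inf => //; exists x.
have inf_ge0 : 0 <= inf N by apply: lb_le_inf => // _ [x _ <-]; exact: sqnorm_ge0.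
have near n : exists x, E x /\ sqnorm x < inf N + (n.+1%:R)^-1.
  have inv_gt0 : 0 < (n.+1%:R : R)^-1 by rewrite invr_gt0 ltr0Sn.
  have [_ [x Ex <-] lt] := inf_adherent inv_gt0 (conj N_ne N_lb).
  by exists x.
have [xs xsP] := choice near.
have mid m n : 4 * inf N <= sqnorm (xs m + xs n).
  have := inf_le _ (midE _ _ (xsP m).1 (xsP n).1).
  rewrite (sqnormZ hV) /cabs2 /= expr0n /= addr0; lra.
have [x0 xs_x0] := hilbert_complete hV (minimizing_seq_cauchy mid (fun n => (xsP n).2)).
exists x0; first by apply: closedE xs_x0 => n; apply: (xsP n).1.
move=> x Ex; apply: le_trans (inf_le _ Ex).
exact: sqnorm_cvg_le inf_ge0 xs_x0 (fun n => (xsP n).2).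
Qed.

Lemma sqnorm_min_orth x0 z :
  (forall s, sqnorm x0 <= sqnorm (x0 + s *: z)) -> ip x0 z = 0.
Proof.
move=> x0_min; apply: cabs2_le0.
have nz_ge0 := sqnorm_ge0 hV z.
set t := (sqnorm z + 1)^-1.
have t_gt0 : 0 < t by rewrite invr_gt0; lra.
have tz : t ^+ 2 * sqnorm z = t - t ^+ 2 by rewrite /t; field; lra.
have := x0_min (- (t%:C%C * ip x0 z)).
rewrite (sqnormDZ hV) Re_conj_scaleN cabs2_scaleN -mulrA [cabs2 _ * _]mulrC mulrA tz.
have := cabs2_ge0 (ip x0 z); nra.
Qed.

Section BoundedFunctional.
Variables (phi : V -> C) (K : R).
Hypothesis phi_linear : forall a x y, phi (a *: x + y) = a * phi x + phi y.
Hypothesis K_ge0 : 0 <= K.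
Hypothesis phi_bounded : forall x, cabs2 (phi x) <= K * sqnorm x.

Lemma functionalD x y : phi (x + y) = phi x + phi y.
Proof. by rewrite -[x in LHS]scale1r phi_linear mul1r. Qed.

Lemma functional0 : phi 0 = 0.
Proof. by apply: (addrI (phi 0)); rewrite -functionalD !addr0. Qed.

Lemma functionalZ a x : phi (a *: x) = a * phi x.
Proof. by rewrite -[a *: x]addr0 phi_linear functional0 addr0. Qed.

Lemma functionalB x y : phi (x - y) = phi x - phi y.
Proof. by rewrite functionalD -scaleN1r functionalZ mulN1r. Qed.

Lemma functional_level_closed c u x :
  (forall n, phi (u n) = c) -> seq_cvg ip u x -> phi x = c.
Proof.
move=> phi_u u_x; apply/eqP; rewrite eq_sym -subr_eq0; apply/eqP/cabs2_le0.
apply/ler_addgt0Pr => e e_gt0; rewrite add0r.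
have K1_gt0 : 0 < K + 1 := ltr_wpDl K_ge0 ltr01.
have [N uN] := seq_cvg_sqnorm hV u_x (divr_gt0 e_gt0 K1_gt0).
have := phi_bounded (u N - x); rewrite functionalB phi_u.
have := uN N (leqnn N); have := sqnorm_ge0 hV (u N - x).
have Kb : (K + 1) * (e / (K + 1)) = e by field; rewrite gt_eqF.
move: (sqnorm _) (e / _) Kb => a b Kb; nra.
Qed.

Theorem riesz_representation : exists k, forall u, phi u = ip u k.
Proof.
have [[u0 phi_u0]|phi_eq0] := pselect (exists u0, phi u0 != 0); last first.
  exists 0 => u; rewrite (ip0r hV); apply: contra_notP phi_eq0 => /eqP.
  by exists u.
pose E := [set x | phi x = 1].
have E_ne : E !=set0.
  by exists ((phi u0)^-1 *: u0); rewrite /E /= functionalZ mulVf.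
have midE x y : E x -> E y -> E ((2^-1)%:C%C *: (x + y)).
  rewrite /E /= functionalZ functionalD => -> ->.
  by apply/eqP; rewrite eq_complex /=; apply/andP; split; apply/eqP; field.
have [x0 Ex0 x0_min] := sqnorm_min_exists E_ne midE (fun u x => @functional_level_closed 1 u x).
have x0_neq0 : sqnorm x0 != 0.
  apply/negP; rewrite eq_le => /andP[/(sqnorm_le0 hV) x0_0 _].
  by move: Ex0; rewrite /E /= x0_0 functional0 => /eqP; rewrite eq_sym oner_eq0.
exists ((sqnorm x0)^-1%:C%C *: x0) => u.
have orth : ip x0 (u - phi u *: x0) = 0.
  apply: sqnorm_min_orth => s; apply: x0_min.
  by rewrite /E /= functionalD functionalZ functionalB functionalZ Ex0 mulr1 subrr mulr0 addr0.
move: orth; rewrite (ipBr hV) (ipZr hV) (ip_real hV x0) => /eqP; rewrite subr_eq0 => /eqP orth.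
rewrite (ipZr hV) (ip_conj hV) orth.
move: (phi u) => [w1 w2]; move: (sqnorm x0) x0_neq0 => n n0.
by apply/eqP; rewrite eq_complex /=; apply/andP; split; apply/eqP; field.
Qed.

End BoundedFunctional.

End Riesz.

Section AdjointResolvent.
Variable R : realType.
Local Notation C := (complex R).
Local Notation Re := complex.Re.
Variable V : lmodType C.
Variable ip : V -> V -> C.
Hypothesis hV : is_hilbert ip.

(* [k] is the Riesz representative of the bounded functional [u |-> ((A - l)^-1 u, y)]. *)
Lemma adjoint_shift_surj (A : op V V) (l : C) : linear_rel A -> resolvent ip A l ->
  forall y, exists k, adjoint ip ip A (k, y + l^* *: k).
Proof.
move=> linA [Ainj Asurj [c [c_ge0 Abound]]] y.
have [Rl RlP] := choice Asurj.
have RlE x u : opshift A l (x, u) -> x = Rl u.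
  by move=> Ax; apply: (opshift_sv_inv linA Ainj) Ax (RlP u).
have Rl_linear a u v : Rl (a *: u + v) = a *: Rl u + Rl v.
  by apply/esym/RlE/(opshift_linear linA); apply: RlP.
have Rl_bound u : sqnorm ip (Rl u) <= Re c ^+ 2 * sqnorm ip u.
  by have := sqnorm_le_of_hnorm hV c_ge0 (Abound _ _ (RlP u)).
pose phi u := ip (Rl u) y.
have phi_linear a u v : phi (a *: u + v) = a * phi u + phi v.
  by rewrite /phi Rl_linear ipZDl.
have K_ge0 : 0 <= Re c ^+ 2 * sqnorm ip y by rewrite mulr_ge0 ?sqr_ge0 ?sqnorm_ge0.
have phi_bound u : cabs2 (phi u) <= (Re c ^+ 2 * sqnorm ip y) * sqnorm ip u.
  apply: le_trans (cauchy_schwarz hV _ _) _.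
  have := Rl_bound u; have := sqnorm_ge0 hV y; have := sqnorm_ge0 hV u.
  move: (sqnorm ip (Rl u)) (sqnorm ip y) (sqnorm ip u) (Re c ^+ 2) => a b d e; nra.
have [k phiE] := riesz_representation hV phi_linear K_ge0 phi_bound.
exists k => x w Axw /=.
have Ax : opshift A l (x, w - l *: x) by exists w.
rewrite -[w](subrK (l *: x)) (ipDl hV) (ipZl hV) -phiE /phi -(RlE _ _ Ax).
by rewrite (ipDr hV) (ipZr hV) conjCK.
Qed.

End AdjointResolvent.

Section GammaField.
Variable R : realType.
Local Notation C := (complex R).
Variables H G : lmodType C.
Variables (ipH : H -> H -> C) (ipG : G -> G -> C).
Hypothesis hG : is_hilbert ipG.
Variables (T : op H H) (Gam0 : H -> G) (l : C).
Hypothesis linT : linear_rel T.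
Hypothesis linGam0 : linear_on (dom T) Gam0.
Hypothesis Gam0_dense : dense_in ipG [set Gam0 f | f in dom T].
Hypothesis A0_surj : forall y, exists k, A0op T Gam0 (k, y + l *: k).

(* [dom T = ker Gam0 + ker (T - l)], so [Gam0] maps [ker (T - l)] onto a dense set. *)
Lemma orth_Gam0_eigker psi :
  (forall h, eigker T l h -> ipG (Gam0 h) psi = 0) -> psi = 0.
Proof.
move=> psi_orth.
have Gam0_orth g : dom T g -> ipG (Gam0 g) psi = 0.
  case=> w Tgw; have [k [/= Tk Gam0k]] := A0_surj (w - l *: g).
  have eig_gk : eigker T l (g - k).
    rewrite /eigker /=; have -> : l *: (g - k) = w - (w - l *: g + l *: k).
      by rewrite scalerBr opprD opprB addrA [w + _]addrC subrK.
    exact (linear_relB linT Tgw Tk).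
  have dk : dom T k by exists (w - l *: g + l *: k).
  have dg : dom T g by exists w.
  by have := psi_orth _ eig_gk; rewrite (linear_onB linGam0 dg dk) Gam0k subr0.
apply: (sqnorm_le0 hG); apply/ler_addgt0Pr => t t_gt0; rewrite add0r.
have e_gt0 : 0 < (Num.sqrt t)%:C%C :> C by rewrite ltcR sqrtr_gt0.
have [_ [g dg <-]] := Gam0_dense psi e_gt0.
rewrite (hnorm_ltE hG _ e_gt0) /= sqr_sqrtr ?(ltW t_gt0) // (sqnormB hG) (ip_conj hG) Gam0_orth //=.
by have := sqnorm_ge0 hG (Gam0 g); lra.
Qed.

Lemma adjoint_gammaf_sv : single_valued (adjoint ipG ipH (gammaf T Gam0 l)).
Proof.
move=> f p p' gp gp'; apply/eqP; rewrite -subr_eq0; apply/eqP/orth_Gam0_eigker.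
move=> h eig_h; have gam_h : gammaf T Gam0 l (Gam0 h, h) by [].
by rewrite (ipBr hG) -(gp _ _ gam_h) -(gp' _ _ gam_h) subrr.
Qed.

End GammaField.

Section Green.
Variable R : realType.
Local Notation C := (complex R).
Variables H G : lmodType C.
Variables (ipH : H -> H -> C) (ipG : G -> G -> C).
Hypotheses (hH : is_hilbert ipH) (hG : is_hilbert ipG).

Definition green_identity (T Tt : op H H) (Gam0 Gam1 Gam0t Gam1t : H -> G) :=
  forall f Tf g Ttg, T (f, Tf) -> Tt (g, Ttg) ->
  ipH Tf g - ipH f Ttg = ipG (Gam1 f) (Gam0t g) - ipG (Gam0 f) (Gam1t g).

Lemma green_identity_sym T Tt Gam0 Gam1 Gam0t Gam1t :
  green_identity T Tt Gam0 Gam1 Gam0t Gam1t ->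
  green_identity Tt T Gam0t Gam1t Gam0 Gam1.
Proof.
move=> green f Tf g Ttg Ttf Tg; have eq := green _ _ _ _ Tg Ttf.
rewrite (ip_conj hH g Tf) (ip_conj hH Ttg f).
rewrite (ip_conj hG (Gam0 g) (Gam1t f)) (ip_conj hG (Gam1 g) (Gam0t f)).
by rewrite -!rmorphB -opprB eq opprB.
Qed.

Lemma is_triple_sym S St T Tt Gam0 Gam1 Gam0t Gam1t :
  is_triple ipH ipG S St T Tt Gam0 Gam1 Gam0t Gam1t ->
  is_triple ipH ipG St S Tt T Gam0t Gam1t Gam0 Gam1.
Proof.
move=> [T_op [Tt_op [TS [TS_core [TtSt [TtSt_core
  [Gam0_lin [Gam1_lin [Gam0t_lin [Gam1t_lin [green [Gam0_dense [Gam0t_dense [M Mt]]]]]]]]]]]]]].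
have green' := green_identity_sym green.
exact: (conj Tt_op (conj T_op (conj TtSt (conj TtSt_core (conj TS (conj TS_core
  (conj Gam0t_lin (conj Gam1t_lin (conj Gam0_lin (conj Gam1_lin
  (conj green' (conj Gam0t_dense (conj Gam0_dense (conj Mt M)))))))))))))).
Qed.

Lemma adjoint_gammaf_shift T Tt Gam0 Gam1 Gam0t Gam1t (l : C) f k :
  green_identity T Tt Gam0 Gam1 Gam0t Gam1t ->
  opshift (A0op T Gam0) l (k, f) ->
  adjoint ipG ipH (gammaf Tt Gam0t l^*) (f, Gam1 k).
Proof.
move=> green [w [[/= Tkw Gam0k] /= ->]] _ h [/= Tth ->].
have := green _ _ _ _ Tkw Tth; rewrite Gam0k (ip0l hG) subr0 (ipZr hH) conjCK => eq.
rewrite (ip_conj hG (Gam1 k)) -eq rmorphB rmorphM /= -!(ip_conj hH).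
by rewrite (ipBr hH) (ipZr hH).
Qed.

End Green.

Definition krein_formula (R : realType) (H G : lmodType (complex R))
    (T : op H H) (Gam0 Gam1 : H -> G) (B1 B2 : op G G) (l : complex R)
    (gts : op H G) : Prop :=
  let A := ABop T Gam0 Gam1 B1 B2 in
  let gam := gammaf T Gam0 l in
  let Mw := weylf T Gam0 Gam1 l in
  let IBMB := opsub opid (opmul B2 (opmul Mw B1)) in
  let Rop := opadd (opinv (opshift (A0op T Gam0) l))
                   (opmul gam (opmul B1 (opmul (opinv IBMB) (opmul B2 gts)))) in
  let cond := fun f => dom (opmul B2 gts) f /\
                       (forall psi, opmul B2 gts (f, psi) -> ran IBMB psi) in
  ~ point_spec A l ->
  (forall f, cond f ->
     ran (opshift A l) f /\
     exists h, [/\ opshift A l (h, f),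
                   (forall h', opshift A l (h', f) -> h' = h) &
                   (forall h', Rop (f, h') <-> h' = h)]) /\
  ((forall f, cond f) ->
     (forall x x' y, opshift A l (x, y) -> opshift A l (x', y) -> x = x') /\
     (forall y, ran (opshift A l) y)).

Section KreinFormula.
Variable R : realType.
Local Notation C := (complex R).
Variables H G : lmodType C.
Variable ipH : H -> H -> C.
Variables (T : op H H) (Gam0 Gam1 : H -> G) (B1 B2 : op G G) (l : C).
Variable gts : op H G.
Hypothesis T_op : is_op T.
Hypotheses (linGam0 : linear_on (dom T) Gam0) (linGam1 : linear_on (dom T) Gam1).
Hypotheses (B1_op : is_op B1) (B2_op : is_op B2).
Hypothesis l_res : resolvent ipH (A0op T Gam0) l.
Hypothesis gts_shift : forall f k, opshift (A0op T Gam0) l (k, f) -> gts (f, Gam1 k).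
Hypothesis gts_sv : single_valued gts.

Local Notation A0 := (A0op T Gam0).
Local Notation A := (ABop T Gam0 Gam1 B1 B2).
Local Notation gam := (gammaf T Gam0 l).
Local Notation Mw := (weylf T Gam0 Gam1 l).
Local Notation IBMB := (opsub opid (opmul B2 (opmul Mw B1))).
Local Notation Rop := (opadd (opinv (opshift A0 l))
  (opmul gam (opmul B1 (opmul (opinv IBMB) (opmul B2 gts))))).

Let linT : linear_rel T := is_op_linear T_op.

Lemma A0op_linear : linear_rel A0.
Proof.
move=> a x y x' y' [Txy /= Gx] [Txy' /= Gx']; split; first exact: linT.
by rewrite /= linGam0 ?Gx ?Gx' ?scaler0 ?addr0 //; [exists y | exists y'].
Qed.

Lemma A0_shift_sv : single_valued (opinv (opshift A0 l)).
Proof. by case: l_res => inj _ _; apply: opshift_sv_inv A0op_linear inj. Qed.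

Lemma A0_shift_surj f : exists k, opshift A0 l (k, f).
Proof. by case: l_res => _ surj _; apply: surj. Qed.

Lemma eigker_Gam0_linear : linear_rel (Defs.fgraph Gam0 (eigker T l)).
Proof.
apply: fgraph_linear; first exact: eigker_lin_closed.
exact (linear_on_sub linGam0 (@eigker_dom _ _ T l)).
Qed.

Lemma gammaf_sv : single_valued gam.
Proof.
apply: opinv_sv eigker_Gam0_linear _ => h [/= Th Gam0h].
case: l_res => inj _ _; apply: inj.
by exists (l *: h); split; [split | rewrite /= subrr].
Qed.

Lemma weylf_linear : linear_rel Mw.
Proof.
apply: opmul_linear (opinv_linear eigker_Gam0_linear).
exact: fgraph_linear (dom_lin_closed linT) linGam1.
Qed.

Lemma IBMB_linear : linear_rel IBMB.
Proof.
apply: opsub_linear; first exact: opid_linear.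
exact: opmul_linear (is_op_linear B2_op) (opmul_linear weylf_linear (is_op_linear B1_op)).
Qed.

Lemma IBMB_elim e c : IBMB (e, c) -> exists a h z,
  [/\ B1 (e, a), eigker T l h, a = Gam0 h, B2 (Gam1 h, z) & c = e - z].
Proof.
move=> [y [z [/= yE [u [[a [B1a [h [[eig_h Gam0h] [_ /= uE]]]]] B2z]] cE]]].
exists a, h, z; split=> //; first by rewrite -uE.
by move: yE; rewrite cE /opid /= => ->.
Qed.

Lemma ABop_linear : linear_rel A.
Proof.
move=> a x y x' y' [Txy [w [/= B2w B1w]]] [Txy' [w' [/= B2w' B1w']]].
have dx : dom T x by exists y.
have dx' : dom T x' by exists y'.
split; first exact: linT.
exists (a *: w + w'); rewrite /= linGam1 // linGam0 //.
by split; [apply: (is_op_linear B2_op) | apply: (is_op_linear B1_op)].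
Qed.

Lemma krein_solution f k chi eta :
  opshift A0 l (k, f) -> B2 (Gam1 k, chi) -> IBMB (eta, chi) ->
  exists h, opmul gam B1 (eta, h) /\ opshift A l (k + h, f).
Proof.
move=> [w [[/= Tkw Gam0k] /= ->]] B2chi.
move=> /IBMB_elim[a [h [z [B1a eig_h Gam0h B2z chiE]]]].
exists h; split; first by exists a.
have dk : dom T k by exists w.
have dh : dom T h := eigker_dom eig_h.
exists (w + l *: h); split; last by rewrite /= scalerDr opprD addrACA subrr addr0.
split; first exact (linear_relD linT Tkw eig_h).
exists eta; split => /=.
- rewrite (linear_onD linGam1 dk dh); have -> : eta = chi + z by rewrite chiE subrK.
  exact (linear_relD (is_op_linear B2_op) B2chi B2z).
- by rewrite (linear_onD linGam0 dk dh) Gam0k add0r -Gam0h.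
Qed.

Section NoEigenvalue.
Hypothesis l_not_eig : ~ point_spec A l.

Lemma ABop_shift_ker x : opshift A l (x, 0) -> x = 0.
Proof.
move=> [y [Axy /= /esym/eqP]]; rewrite subr_eq0 => /eqP yE.
by apply: contra_notP l_not_eig => x_neq0; exists x => //; rewrite -yE.
Qed.

Lemma IBMB_ker e : IBMB (e, 0) -> e = 0.
Proof.
move=> /IBMB_elim[a [h [z [B1a eig_h Gam0h B2z /esym/eqP]]]].
rewrite subr_eq0 => /eqP ez; subst z.
have h0 : h = 0.
  apply: ABop_shift_ker; exists (l *: h); split; last by rewrite /= subrr.
  by split => //; exists e; rewrite -Gam0h.
move: B2z; rewrite h0 (linear_on0 linGam1 (eigker_dom eig_h)).
by case: B2_op => _ _; apply.
Qed.

Lemma krein_rhs_sv : single_valued Rop.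
Proof.
apply: opadd_sv A0_shift_sv _.
apply: opmul_sv gammaf_sv _; apply: opmul_sv (is_op_sv B1_op) _.
apply: opmul_sv (opinv_sv IBMB_linear IBMB_ker) _.
exact: opmul_sv (is_op_sv B2_op) gts_sv.
Qed.

End NoEigenvalue.

Lemma krein_solve f : dom (opmul B2 gts) f ->
  (forall psi, opmul B2 gts (f, psi) -> ran IBMB psi) ->
  exists h, opshift A l (h, f) /\ Rop (f, h).
Proof.
move=> [chi B2gts_chi] ran_cond.
have [eta IBMB_eta] := ran_cond _ B2gts_chi.
have [k A0k] := A0_shift_surj f.
have B2chi : B2 (Gam1 k, chi).
  by case: B2gts_chi => psi [gts_psi]; rewrite (gts_sv gts_psi (gts_shift A0k)).
have [h [[a [B1a gam_a]] Ah]] := krein_solution A0k B2chi IBMB_eta.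
exists (k + h); split => //; exists k, h; split => //.
exists a; split => //; exists eta; split => //; by exists chi.
Qed.

Theorem krein_resolvent : krein_formula T Gam0 Gam1 B1 B2 l gts.
Proof.
move=> /= l_not_eig.
have A_sv := opshift_sv_inv ABop_linear (ABop_shift_ker l_not_eig).
split=> [f [domf ranf] | cond_all].
  have [h [Ah Rh]] := krein_solve domf ranf.
  split; first by exists h.
  exists h; split=> // h'; first by move=> Ah'; apply: A_sv Ah' Ah.
  by split=> [Rh' | ->]; first exact (krein_rhs_sv l_not_eig Rh' Rh).
split=> [x x' y Ax Ax' | y]; first exact: A_sv Ax Ax'.
by have [domy rany] := cond_all y; have [h [Ah _]] := krein_solve domy rany; exists h.
Qed.

End KreinFormula.

Lemma krein_triple (R : realType) (H G : lmodType (complex R))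
    (ipH : H -> H -> complex R) (ipG : G -> G -> complex R)
    (S St T Tt : op H H) (Gam0 Gam1 Gam0t Gam1t : H -> G) (B1 B2 : op G G)
    (l : complex R) :
  is_hilbert ipH -> is_hilbert ipG ->
  is_triple ipH ipG S St T Tt Gam0 Gam1 Gam0t Gam1t ->
  is_op B1 -> is_op B2 -> resolvent ipH (A0op T Gam0) l ->
  krein_formula T Gam0 Gam1 B1 B2 l (adjoint ipG ipH (gammaf Tt Gam0t l^*)).
Proof.
move=> hH hG [T_op [Tt_op [_ [_ [_ [_ [lin0 [lin1 [lin0t [_
  [green [_ [dense0t [M _]]]]]]]]]]]]]] B1_op B2_op l_res.
have At0_surj y : exists k, A0op Tt Gam0t (k, y + l^* *: k).
  have [k kP] := adjoint_shift_surj hH (A0op_linear T_op lin0) l_res y.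
  by exists k; rewrite -M.
apply: krein_resolvent T_op lin0 lin1 B1_op B2_op l_res _ _.
- by move=> f k; exact (adjoint_gammaf_shift hH hG green).
- exact (adjoint_gammaf_sv hG (is_op_linear Tt_op) lin0t dense0t At0_surj).
Qed.

Theorem theorem4p4 (R : realType)
  (H G : lmodType (complex R))
  (ipH : H -> H -> complex R) (ipG : G -> G -> complex R)
  (hH : is_hilbert ipH) (hHsep : separable ipH) (hG : is_hilbert ipG)
  (S St T Tt : op H H) (Gam0 Gam1 Gam0t Gam1t : H -> G)
  (hS : adjoint_pair ipH S St)
  (htriple : is_triple ipH ipG S St T Tt Gam0 Gam1 Gam0t Gam1t)
  (hrho : exists l0, resolvent ipH (A0op T Gam0) l0)
  (B1 B2 Bt1 Bt2 : op G G)
  (hB1 : is_op B1) (hB2 : is_op B2) (hBt1 : is_op Bt1) (hBt2 : is_op Bt2)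
  (l mu : complex R)
  (hl : resolvent ipH (A0op T Gam0) l)
  (hmu : resolvent ipH (A0op Tt Gam0t) mu) :
  (let A := ABop T Gam0 Gam1 B1 B2 in
   let gam := gammaf T Gam0 l in
   let Mw := weylf T Gam0 Gam1 l in
   let gts := adjoint ipG ipH (gammaf Tt Gam0t (l^*)%C) in
   let IBMB := opsub opid (opmul B2 (opmul Mw B1)) in
   let Rop := opadd (opinv (opshift (A0op T Gam0) l))
                    (opmul gam (opmul B1 (opmul (opinv IBMB) (opmul B2 gts)))) in
   let cond := fun f => dom (opmul B2 gts) f /\
                        (forall psi, opmul B2 gts (f, psi) -> ran IBMB psi) in
   ~ point_spec A l ->
   (forall f, cond f ->
      ran (opshift A l) f /\
      exists h, [/\ opshift A l (h, f),
                    (forall h', opshift A l (h', f) -> h' = h) &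
                    (forall h', Rop (f, h') <-> h' = h)]) /\
   ((forall f, cond f) ->
      (forall x x' y, opshift A l (x, y) -> opshift A l (x', y) -> x = x') /\
      (forall y, ran (opshift A l) y)))
  /\
  (let At := ABop Tt Gam0t Gam1t Bt1 Bt2 in
   let gamt := gammaf Tt Gam0t mu in
   let Mwt := weylf Tt Gam0t Gam1t mu in
   let gs := adjoint ipG ipH (gammaf T Gam0 (mu^*)%C) in
   let IBMBt := opsub opid (opmul Bt2 (opmul Mwt Bt1)) in
   let Ropt := opadd (opinv (opshift (A0op Tt Gam0t) mu))
                 (opmul gamt (opmul Bt1 (opmul (opinv IBMBt) (opmul Bt2 gs)))) in
   let condt := fun g => dom (opmul Bt2 gs) g /\
                         (forall psi, opmul Bt2 gs (g, psi) -> ran IBMBt psi) in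
   ~ point_spec At mu ->
   (forall g, condt g ->
      ran (opshift At mu) g /\
      exists h, [/\ opshift At mu (h, g),
                    (forall h', opshift At mu (h', g) -> h' = h) &
                    (forall h', Ropt (g, h') <-> h' = h)]) /\
   ((forall g, condt g) ->
      (forall x x' y, opshift At mu (x, y) -> opshift At mu (x', y) -> x = x') /\
      (forall y, ran (opshift At mu) y))).
Proof.
split; first exact: krein_triple hH hG htriple hB1 hB2 hl.
exact: krein_triple hH hG (is_triple_sym hH hG htriple) hBt1 hBt2 hmu.
Qed.
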